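(* Let $a,b,c,d\in\mathbb C$ with $a\notin\mathbb Z$ and $d\notin\{0,-1,-2,\dots\}$. Then, as an identity of formal power series in $x,y$, $$F(a,b;d;x)\,{}_1F_1(c;1-a;y)=\mathrm H_2(a,b,c;d;x,-y)+\sum_{k=1}^\infty\sum_{l=1}^k\frac{(-1)^{k-l}(k-1)!}{(l-1)!\,l!\,(k-l)!}\,\frac{(b)_l(c)_k}{(1-a)_k(1-a)_{k-l}(d)_l}\,x^ly^k\,\mathrm H_2(a-k+l,b+l,c+k;d+l;x,-y).$$
   Context: Pochhammer symbol: $(\lambda)_k=\Gamma(\lambda+k)/\Gamma(\lambda)$ for every integer $k$ (possibly negative) whenever defined; $(\lambda)_0=1$. $F(a,b;c;x)=\sum_{k\ge0}\frac{(a)_k(b)_k}{(c)_k k!}x^k$, ${}_1F_1(a;c;x)=\sum_{k\ge0}\frac{(a)_k}{(c)_k k!}x^k$. Confluent Horn function $\mathrm H_2(a,b,c;d;x,y)=\sum_{p,q\ge0}\frac{(a)_{p-q}(b)_p(c)_q}{(d)_p\,p!\,q!}x^py^q$. All functions are regarded as formal power series in $x,y$; the infinite double sum converges in the formal (degree) topology. *)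

From HB Require Import structures.
From mathcomp Require Import all_boot all_order all_algebra.
Set Implicit Arguments. Unset Strict Implicit. Unset Printing Implicit Defensive.
Import Order.TTheory GRing.Theory Num.Theory.
Local Open Scope ring_scope.

Section Defs.
Variable R : fieldType.

(* Pochhammer symbol (l)_k = Gamma(l+k)/Gamma(l) for every integer k:
   k = n >= 0 : l (l+1) ... (l+n-1);
   k = -(n+1) : 1 / ((l-1)(l-2)...(l-(n+1))). *)
Definition poch (l : R) (k : int) : R :=
  match k with
  | Posz n => \prod_(i < n) (l + i%:R)
  | Negz n => (\prod_(i < n.+1) (l - (i.+1)%:R))^-1
  end.

(* Formal power series in x, y : coefficient of x^p y^q. *)
Definition fps := nat -> nat -> R.

Definition fps_mul (f g : fps) : fps := fun p q =>
  \sum_(i < p.+1) \sum_(j < q.+1) f i j * g (p - i)%N (q - j)%N.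

(* x^l y^k * f *)
Definition fps_shift (l k : nat) (f : fps) : fps := fun p q =>
  if (l <= p)%N && (k <= q)%N then f (p - l)%N (q - k)%N else 0.

Definition gauss2F1 (a b d : R) : fps := fun p q =>
  if q == 0%N then poch a p * poch b p / (poch d p * p`!%:R) else 0.

Definition kummer1F1 (c e : R) : fps := fun p q =>
  if p == 0%N then poch c q / (poch e q * q`!%:R) else 0.

Definition horn_H2 (a b c d : R) : fps := fun p q =>
  poch a (Posz p - Posz q) * poch b p * poch c q / (poch d p * p`!%:R * q`!%:R).

Definition horn_H2_neg (a b c d : R) : fps := fun p q =>
  horn_H2 a b c d p q * (-1) ^+ q.

Definition main_coef (a b c d : R) (k l : nat) : R :=
  (-1) ^+ (k - l) * (k.-1)`!%:R / ((l.-1)`!%:R * l`!%:R * (k - l)`!%:R)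
  * (poch b l * poch c k / (poch (1 - a) k * poch (1 - a) (k - l)%N * poch d l)).

(* The right-hand side; the double sum over 1 <= l <= k converges in the
   formal topology: only terms with l <= p, k <= q contribute to x^p y^q. *)
Definition main_rhs (a b c d : R) : fps := fun p q =>
  horn_H2_neg a b c d p q +
  \sum_(1 <= k < q.+1) \sum_(1 <= l < k.+1)
     main_coef a b c d k l *
     fps_shift l k (horn_H2_neg (a - k%:R + l%:R) (b + l%:R) (c + k%:R) (d + l%:R)) p q.

End Defs.

From HB Require Import structures.
From mathcomp Require Import all_boot all_order all_algebra.
From mathcomp Require Import ring zify.
Import Order.TTheory GRing.Theory Num.Theory.
Local Open Scope ring_scope.
Set Implicit Arguments. Unset Strict Implicit.

(* Writing the (k,l) term of the double
   sum as a multiple of the H2 coefficient, its l-dependence is only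
   C(k-1,l-1) C(p,l), which Vandermonde sums to C(p+k-1,k); the H2 term is the
   missing k = 0 term of the resulting sum over k.  What remains is
   (a)_p / ((1-a)_q q!) = (a)_{p-q} sum_{k<=q} (-1)^{q-k} C(p+k-1,k) / ((1-a)_k (q-k)!),
   which, after (a)_p = (a)_{p-q} (-1)^q (1-a-p)_q, is the Chu-Vandermonde
   identity (e-x)_q = sum_k (-1)^k C(q,k) (x)_k (e+k)_{q-k} at x = p, e = 1-a. *)

Arguments poch : simpl never.

Section Pochhammer.
Variable R : fieldType.
Implicit Types x e : R.

Definition nonint x := forall z : int, x != z%:~R.

Lemma nonint_addn x (n : nat) : nonint x -> nonint (x + n%:R).
Proof.
move=> hx z; apply/eqP=> exz; move: (hx (z - n%:Z)).
by rewrite intrB -exz addrK eqxx.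
Qed.

Lemma nonint_subn x (n : nat) : nonint x -> nonint (x - n%:R).
Proof.
move=> hx z; apply/eqP=> exz; move: (hx (z + n%:Z)).
by rewrite intrD -exz subrK eqxx.
Qed.

Lemma nonint_1sub x : nonint x -> nonint (1 - x).
Proof.
move=> hx z; apply/eqP=> exz; move: (hx (1 - z)).
by rewrite intrB -exz opprB addrC subrK eqxx.
Qed.

Lemma nonint_neq0 x : nonint x -> x != 0.
Proof. by move=> hx; move: (hx 0). Qed.

Lemma nonint_addn_neq0 x (n : nat) : nonint x -> x + n%:R != 0.
Proof. by move=> hx; apply/nonint_neq0/nonint_addn. Qed.

Lemma poch0 x : poch x 0%N = 1.
Proof. by rewrite /poch big_ord0. Qed.

Lemma pochSl x (n : nat) : poch x n.+1 = x * poch (x + 1) n.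
Proof.
rewrite /poch big_ord_recl addr0; congr (_ * _); apply: eq_bigr => i _.
by rewrite /= -addrA -natr1 (addrC 1).
Qed.

Lemma pochSr x (n : nat) : poch x n.+1 = poch x n * (x + n%:R).
Proof. by rewrite /poch big_ord_recr. Qed.

Lemma poch_addn x (m n : nat) : poch x (m + n)%N = poch x m * poch (x + m%:R) n.
Proof.
rewrite /poch big_split_ord; congr (_ * _); apply: eq_bigr => i _.
by rewrite /= natrD addrA.
Qed.

Lemma poch_neq0 x (n : nat) : (forall i : nat, x + i%:R != 0) -> poch x n != 0.
Proof. by move=> hx; rewrite /poch prodf_seq_neq0; apply/allP => i _ /=. Qed.

Lemma poch_addn_neq0 x (m n : nat) :
  (forall i : nat, x + i%:R != 0) -> poch (x + m%:R) n != 0.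
Proof. by move=> hx; apply/poch_neq0 => i; rewrite -addrA -natrD. Qed.

Lemma nonint_poch_neq0 x (n : nat) : nonint x -> poch x n != 0.
Proof. by move=> hx; apply/poch_neq0 => i; apply: nonint_addn_neq0. Qed.

Lemma poch_reflect x (n : nat) : poch (x - n%:R) n = (-1) ^+ n * poch (1 - x) n.
Proof.
elim: n => [|n IHn]; first by rewrite !poch0 mulr1.
rewrite pochSl pochSr exprS.
have -> : x - n.+1%:R + 1 = x - n%:R by rewrite -natr1; ring.
by rewrite IHn -natr1; ring.
Qed.

Lemma poch_natr (p k : nat) : poch (p%:R : R) k = ((p + k).-1 ^_ k)%:R.
Proof.
elim: k => [|k IHk]; first by rewrite poch0.
rewrite pochSr IHk addnS -natrD -natrM /=; congr (_%:R).
by case: (p + k)%N => [|s] /=; [rewrite muln0 ffact0n | rewrite ffactSS mulnC].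
Qed.

(* For negative z the leading factor of the denominator of (x + 1)_z is x, which cancels. *)
Lemma poch_add1z x (z : int) : nonint x -> poch x (1 + z) = x * poch (x + 1) z.
Proof.
move=> hx; have x_neq0 := nonint_neq0 hx.
case: z => [n|[|n]]; first by rewrite -pochSl.
  by rewrite /poch /= big_ord0 big_ord1 /= addrK mulfV.
have -> : (1 + Negz n.+1 = Negz n)%R by rewrite !NegzE; lia.
rewrite /poch [in RHS]big_ord_recl /= addrK invfM mulrA mulfV // mul1r.
by congr (_ ^-1); apply: eq_bigr => i _; rewrite /bump /= [in RHS]mulrS; ring.
Qed.

Lemma poch_addz x (m : nat) (z : int) : nonint x ->
  poch x (Posz m + z) = poch x m * poch (x + m%:R) z.
Proof.
elim: m x => [|m IHm] x hx; first by rewrite add0r poch0 mul1r addr0.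
have -> : (Posz m.+1 + z = 1 + (Posz m + z))%R by lia.
rewrite poch_add1z // IHm; last exact: (nonint_addn 1 hx).
by rewrite pochSl mulrA -addrA -natr1 (addrC 1).
Qed.

Lemma poch_split_reflect x (p q : nat) : nonint x ->
  poch x p = poch x (Posz p - Posz q) * (-1) ^+ q * poch (1 - x - p%:R) q.
Proof.
move=> hx; have hxq := nonint_subn q hx.
have hqpq : poch (x - q%:R) (q + p)%N = poch (x - q%:R) q * poch x p.
  by rewrite poch_addn subrK.
apply: (mulfI (nonint_poch_neq0 q hxq)).
rewrite -hqpq addnC poch_addn.
have -> : poch (x - q%:R) p = poch (x - q%:R) q * poch x (Posz p - Posz q).
  rewrite -[X in poch X (_ - _)](subrK (q%:R) x) -poch_addz //.
  by congr poch; lia.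
have -> : x - q%:R + p%:R = x + p%:R - q%:R by ring.
by rewrite (poch_reflect (x + p%:R)) opprD addrA; ring.
Qed.

Lemma Chu_Vandermonde_poch (q : nat) x e :
  \sum_(k < q.+1) (-1) ^+ k * 'C(q, k)%:R * poch x k * poch (e + k%:R) (q - k)%N
  = poch (e - x) q.
Proof.
elim: q x e => [|q IHq] x e; first by rewrite big_ord1 !poch0 !mulr1.
have binS_right : \sum_(k < q.+2)
      (-1) ^+ k * 'C(q, k)%:R * poch x k * poch (e + k%:R) (q.+1 - k)%N
    = (e + q%:R) * poch (e - x) q.
  rewrite big_ord_recr /= bin_small // mulr0n mulr0 !mul0r addr0 -IHq mulr_sumr.
  apply: eq_bigr => k _; have hk : (k <= q)%N by rewrite -ltnS.
  by rewrite subSn // pochSr -addrA -natrD subnKC //; ring.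
have binS_left : \sum_(k < q.+1)
      (-1) ^+ k.+1 * 'C(q, k)%:R * poch x k.+1 * poch (e + k.+1%:R) (q - k)%N
    = - x * poch (e - x) q.
  have -> : e - x = e + 1 - (x + 1) by ring.
  rewrite -IHq mulr_sumr; apply: eq_bigr => k _.
  by rewrite pochSl exprS -natr1 addrA (addrAC e); ring.
rewrite big_ord_recl.
under eq_bigr => i _ do rewrite lift0 binS natrD !mulrDr !mulrDl.
rewrite big_split /= binS_left addrA.
transitivity ((e + q%:R) * poch (e - x) q + - x * poch (e - x) q); last first.
  by rewrite pochSr; ring.
congr (_ + _); rewrite -binS_right [RHS]big_ord_recl !bin0; congr (_ + _).
Qed.

End Pochhammer.

Lemma Vandermonde_pred (p k : nat) : (0 < k)%N ->
  \sum_(1 <= l < k.+1) 'C(k.-1, l.-1) * 'C(p, l) = 'C((p + k).-1, k).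
Proof.
case: k => [//|k] _.
rewrite big_add1 /= addnS /= -binomial.Vandermonde big_ord_recl /= subn0.
rewrite (bin_small (ltnSn k)) muln0 add0n big_mkord.
by apply: eq_bigr => i _; rewrite /bump /= subSS bin_sub 1?mulnC // -ltnS.
Qed.

Lemma natr_fact_neq0 (R : numDomainType) (n : nat) : (n`!%:R : R) != 0.
Proof. by rewrite pnatr_eq0 -lt0n fact_gt0. Qed.

Lemma natr_bin_neq0 (R : numDomainType) (n k : nat) :
  (k <= n)%N -> ('C(n, k)%:R : R) != 0.
Proof. by move=> hkn; rewrite pnatr_eq0 -lt0n bin_gt0. Qed.

Section Coefficients.
Variable R : numFieldType.
Variables a b c d : R.
Hypothesis ha : nonint a.
Hypothesis hd : forall n : nat, d != - n%:R.

Let ha1 : nonint (1 - a) := nonint_1sub ha.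

Lemma d_addn_neq0 (i : nat) : d + i%:R != 0.
Proof. by rewrite addr_eq0 hd. Qed.

Lemma fps_mul_gauss_kummer (p q : nat) :
  fps_mul (gauss2F1 a b d) (kummer1F1 c (1 - a)) p q =
  poch a p * poch b p / (poch d p * p`!%:R) * (poch c q / (poch (1 - a) q * q`!%:R)).
Proof.
rewrite /fps_mul big_ord_recr /= big1 ?add0r => [|i _]; last first.
  by apply: big1 => j _; rewrite /kummer1F1 subn_eq0 leqNgt ltn_ord mulr0.
rewrite big_ord_recl /= big1 ?addr0 => [|j _]; last by rewrite /gauss2F1 mul0r.
by rewrite /gauss2F1 /kummer1F1 /= subnn subn0.
Qed.

Lemma expansion_term (p q k : nat) : (k <= q)%N ->
  (-1) ^+ (q - k) / (poch (1 - a) k * (q - k)`!%:R) * 'C((p + k).-1, k)%:R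
  = (-1) ^+ q / (poch (1 - a) q * q`!%:R) *
    ((-1) ^+ k * 'C(q, k)%:R * poch (p%:R) k * poch (1 - a + k%:R) (q - k)%N).
Proof.
move=> hkq.
have sign_q : (-1) ^+ q = (-1) ^+ (q - k) / (-1) ^+ k :> R.
  by rewrite invr_sign -exprD subnK.
have poch_q : poch (1 - a) q = poch (1 - a) k * poch (1 - a + k%:R) (q - k)%N.
  by rewrite -poch_addn subnKC.
rewrite poch_natr -bin_ffact -(bin_fact hkq) !natrM sign_q poch_q.
field.
rewrite !natr_fact_neq0 natr_bin_neq0 // signr_eq0 !nonint_poch_neq0 //.
exact: nonint_addn.
Qed.

Lemma poch_div_expansion (p q : nat) :
  poch a p / (poch (1 - a) q * q`!%:R) = poch a (Posz p - Posz q) *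
    \sum_(0 <= k < q.+1) (-1) ^+ (q - k) / (poch (1 - a) k * (q - k)`!%:R)
                         * 'C((p + k).-1, k)%:R.
Proof.
rewrite big_mkord (eq_bigr _ (fun (k : 'I_q.+1) _ => @expansion_term p q k (ltn_ord k))).
rewrite -mulr_sumr Chu_Vandermonde_poch (poch_split_reflect p q ha).
field.
by rewrite natr_fact_neq0 nonint_poch_neq0.
Qed.

Lemma main_term_eq (p q k l : nat) : (0 < l)%N -> (l <= k)%N -> (k <= q)%N ->
  main_coef a b c d k l *
    fps_shift l k (horn_H2_neg (a - k%:R + l%:R) (b + l%:R) (c + k%:R) (d + l%:R)) p q
  = horn_H2 a b c d p q * q`!%:R *
    ((-1) ^+ (q - k) / (poch (1 - a) k * (q - k)`!%:R) * ('C(k.-1, l.-1) * 'C(p, l))%:R).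
Proof.
move=> l_gt0 hlk hkq.
rewrite /fps_shift hkq andbT.
have [hlp | hpl] := leqP l p; last by rewrite (bin_small hpl) muln0 mulr0n !mulr0.
rewrite /horn_H2_neg /horn_H2 /main_coef.
have poch_b : poch b p = poch b l * poch (b + l%:R) (p - l)%N.
  by rewrite -poch_addn subnKC.
have poch_c : poch c q = poch c k * poch (c + k%:R) (q - k)%N.
  by rewrite -poch_addn subnKC.
have poch_d : poch d p = poch d l * poch (d + l%:R) (p - l)%N.
  by rewrite -poch_addn subnKC.
have poch_a : poch (a - k%:R + l%:R) (Posz (p - l) - Posz (q - k))
    = poch (1 - a) (k - l)%N * poch a (Posz p - Posz q) / (-1) ^+ (k - l).
  have -> : a - k%:R + l%:R = a - (k - l)%N%:R by rewrite natrB //; ring.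
  have -> : (Posz (p - l) - Posz (q - k) = Posz (k - l) + (Posz p - Posz q))%R by lia.
  rewrite poch_addz; last exact: nonint_subn.
  by rewrite subrK poch_reflect invr_sign; ring.
have fact_k : ((k.-1)`!%:R : R) = 'C(k.-1, l.-1)%:R * ((l.-1)`!%:R * (k - l)`!%:R).
  have -> : (k - l = k.-1 - l.-1)%N by lia.
  by rewrite -!natrM bin_fact //; lia.
have fact_p : (p`!%:R : R) = 'C(p, l)%:R * (l`!%:R * (p - l)`!%:R).
  by rewrite -!natrM bin_fact.
rewrite poch_b poch_c poch_d poch_a fact_k fact_p natrM.
field.
by rewrite !natr_fact_neq0 natr_bin_neq0 // signr_eq0 !(nonint_poch_neq0 _ ha1)
  poch_addn_neq0 ?poch_neq0 //; apply: d_addn_neq0.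
Qed.

Lemma main_coef_sum (p q k : nat) : (0 < k)%N -> (k <= q)%N ->
  \sum_(1 <= l < k.+1) main_coef a b c d k l *
    fps_shift l k (horn_H2_neg (a - k%:R + l%:R) (b + l%:R) (c + k%:R) (d + l%:R)) p q
  = horn_H2 a b c d p q * q`!%:R *
    ((-1) ^+ (q - k) / (poch (1 - a) k * (q - k)`!%:R) * 'C((p + k).-1, k)%:R).
Proof.
move=> k_gt0 hkq.
under eq_big_nat => l /andP[l_gt0 hlk] do rewrite main_term_eq //.
by rewrite -mulr_sumr -mulr_sumr -natr_sum Vandermonde_pred.
Qed.

End Coefficients.

Theorem mainTheorem5 (R : numClosedFieldType) (a b c d : R)
  (ha : forall z : int, a != z%:~R)
  (hd : forall n : nat, d != - n%:R) :
  forall p q : nat,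
    fps_mul (gauss2F1 a b d) (kummer1F1 c (1 - a)) p q = main_rhs a b c d p q.
Proof.
move=> p q.
rewrite fps_mul_gauss_kummer /main_rhs.
under eq_big_nat => k /andP[k_gt0 hkq] do rewrite main_coef_sum //.
rewrite -mulr_sumr.
transitivity (poch b p * poch c q / (poch d p * p`!%:R) *
              (poch a p / (poch (1 - a) q * q`!%:R))); first by ring.
rewrite poch_div_expansion // big_ltn // subn0 addn0 bin0 poch0.
rewrite /horn_H2_neg /horn_H2.
field.
by rewrite !natr_fact_neq0 poch_neq0 //; apply: d_addn_neq0.
Qed.
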